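(* Let $\tilde f(x,\omega)=f(x,\mu(\omega))$ be a random feed-forward neural network of depth $I$, where $f$ is an infinite-width neural network and $\mu:\Omega\to\mathcal U$ is an $\mathcal F/\mathcal B(\mathcal U)$-measurable random parameter on a probability space $(\Omega,\mathcal F,\mathbb P)$. Then $\mathrm{size}(\tilde f)$, $\mathrm{Growth}(\tilde f)$ and $\mathrm{Lip}(\tilde f)$ are random variables.
   Context: Let $\mathcal X_0=\mathbb R^{d_1}$, $\mathcal X_i=\ell^2(\mathbb N)$ for $1\le i\le I$, $\mathcal X_{I+1}=\mathbb R^{d_3}$. The layer-$i$ parameter ($i=0,\dots,I$) is a vector measure $\mu_i=\sum_{m}w^{i+1}_m\delta_m$ ($m\in\{0,\dots,d_1\}$ if $i=0$, $m\in\{0,1,2,\dots\}$ otherwise) with $w^{i+1}_m\in\mathcal X_{i+1}$ and finite total variation norm $\|\mu_i\|_{TV}=\sum_m\|w^{i+1}_m\|$; $\mathcal U$ is the product of these Banach spaces with the product metric and Borel $\sigma$-algebra $\mathcal B(\mathcal U)$. The infinite-width network is $f=f_{I+1}\circ\cdots\circ f_1$, $f_1(x)=W^1x+b^1$, $f_{i+1}(y)=W^{i+1}\sigma(y)+b^{i+1}$, with $b^{i+1}=w^{i+1}_0$, $W^{i+1}y=\sum_{m\ge1}w^{i+1}_my_{m-1}$, and $\sigma$ the componentwise ReLU. Random variables: $\mathrm{size}(\tilde f)(\omega)$ = number of nonzero scalar entries of all $w^{i+1}_m(\mu(\omega))$ (a $[0,\infty]$-valued map); $\mathrm{Growth}(\tilde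 f)(\omega)=\sup_{x\in\mathbb R^{d_1}}\|\tilde f(x,\omega)\|/(1+\|x\|)$; $\mathrm{Lip}(\tilde f)(\omega)=\sup_{x\ne y}\|\tilde f(x,\omega)-\tilde f(y,\omega)\|/\|x-y\|$. *)

From HB Require Import structures.
From mathcomp Require Import all_boot all_order all_algebra.
From mathcomp Require Import all_classical all_reals all_analysis measurable_realfun.
Set Implicit Arguments. Unset Strict Implicit. Unset Printing Implicit Defensive.
Import Order.TTheory GRing.Theory Num.Theory.
Import numFieldNormedType.Exports.
Local Open Scope classical_set_scope.
Local Open Scope ring_scope.

(* Every space X_i (R^{d1}, l^2(N), R^{d3}) is encoded as a space of
   real sequences nat -> R: l^2(N) literally, and R^d as the sequences that
   vanish at all coordinates n >= d (an isometric identification).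
   A full parameter theta : nat -> nat -> nat -> R is read as
     theta i m n = n-th coordinate of w^{i+1}_m   (layer i = 0..I, atom m). *)

Section Defs.
Variable R : realType.

Definition Rd (d : nat) : set (nat -> R) := [set x | forall n, (d <= n)%N -> x n = 0].

Definition in_l2 (x : nat -> R) : Prop := (\sum_(n <oo) ((x n) ^+ 2)%:E < +oo)%E.
Definition l2norm (x : nat -> R) : R := Num.sqrt (fine (\sum_(n <oo) ((x n) ^+ 2)%:E)%E).

Variables (d1 d3 I : nat).

(* theta encodes an element of U = prod_{i=0}^I M(index set_i ; X_{i+1}) *)
Definition isParam (theta : nat -> nat -> nat -> R) : Prop :=
  [/\ (forall i m n, (I < i)%N -> theta i m n = 0),
      (forall m n, (d1 < m)%N -> theta 0%N m n = 0),
      (forall m, Rd d3 (theta I m)),                              (* X_{I+1} = R^{d3} *)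
      (forall i m, (i <= I)%N -> in_l2 (theta i m)) &
      (forall i, (i <= I)%N ->
          (\sum_(m <oo) (l2norm (theta i m))%:E < +oo)%E)].

Definition paramU := {theta : nat -> nat -> nat -> R | isParam theta}.

Definition distU (u v : paramU) : R :=
  \sum_(i < I.+1)
    fine (\sum_(m <oo) (l2norm (fun n => proj1_sig u i m n - proj1_sig v i m n))%:E)%E.

Definition openU (A : set paramU) : Prop :=
  forall u, A u -> exists2 e : R, 0 < e & forall v, distU u v < e -> A v.

Definition borelU : set (set paramU) := <<s setT, openU >>.

Definition relu (y : nat -> R) : nat -> R := fun n => Num.max (y n) 0.

(* affine map of layer i:  y |-> W^{i+1} y + b^{i+1},
   (W^{i+1} y)_n = sum_{m >= 1} w^{i+1}_m(n) y_{m-1} *)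
Definition layer (theta : nat -> nat -> nat -> R) (i : nat) (y : nat -> R) : nat -> R :=
  fun n => theta i 0%N n + limn (fun N => \sum_(1 <= m < N) theta i m n * y m.-1).

Fixpoint hidden (theta : nat -> nat -> nat -> R) (k : nat) (x : nat -> R) : nat -> R :=
  match k with
  | 0%N => layer theta 0 x
  | k'.+1 => layer theta k (relu (hidden theta k' x))
  end.

Definition net (theta : nat -> nat -> nat -> R) (x : nat -> R) : nat -> R := hidden theta I x.

Definition sizeN (theta : nat -> nat -> nat -> R) : \bar R :=
  (\sum_(i < I.+1) \sum_(m <oo) \sum_(n <oo) ((theta i m n != 0)%:R)%:E)%E.

Definition growthN (theta : nat -> nat -> nat -> R) : \bar R :=
  ereal_sup [set ((l2norm (net theta x)) / (1 + l2norm x))%:E | x in Rd d1].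

Definition lipN (theta : nat -> nat -> nat -> R) : \bar R :=
  ereal_sup [set e | exists x y, [/\ Rd d1 x, Rd d1 y, x <> y &
     e = ((l2norm (fun n => net theta x n - net theta y n))
            / l2norm (fun n => x n - y n))%:E]].

End Defs.

From Pilot Require Import Defs.
From HB Require Import structures.
From mathcomp Require Import all_boot all_order all_algebra.
From mathcomp Require Import all_classical all_reals all_analysis measurable_realfun.
From mathcomp Require Import ring lra.
Set Implicit Arguments. Unset Strict Implicit. Unset Printing Implicit Defensive.
Import Order.TTheory GRing.Theory Num.Theory.
Import numFieldNormedType.Exports.
Local Open Scope classical_set_scope.
Local Open Scope ring_scope.

(* All three maps are lower semicontinuous on the parameter space, so their strict
   superlevel sets are open, hence Borel, and their preimages under [mu] are events.
   Every scalar entry of a parameter is 1-Lipschitz for the product metric, so [size],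
   a countable sum of indicators of the open sets {entry <> 0}, is lower semicontinuous
   term by term.  For a fixed input, induction on the layers shows that the network
   output depends continuously on the parameter, uniformly in the output coordinate:
   each affine map is controlled by the total variation norm of its layer and ReLU is
   1-Lipschitz.  Outputs lie in R^{d3}, so their norms are continuous in the parameter,
   and [Growth] and [Lip] are suprema of continuous functions. *)

Section RealEstimates.
Variable R : realType.
Implicit Types (a b y : nat -> R) (T B K : R).

Lemma series_abs_bounded (f : nat -> R) K :
  (forall N, \sum_(0 <= m < N) `|f m| <= K) ->
  cvgn (series f) /\ `|limn (series f)| <= K.
Proof.
move=> hK.
have cvg_norm : cvgn [normed series f].
  apply: nondecreasing_is_cvgn; last by exists K => _ [N _ <-]; exact: hK.
  by apply: nondecreasing_series => n _ _; exact: normr_ge0.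
split; first exact: normed_cvg.
apply: le_trans (lim_series_norm cvg_norm) _.
by apply: limr_le => //; apply: nearW => N; exact: hK.
Qed.

Definition wsum a y N := \sum_(1 <= m < N) a m * y m.-1.

Definition affine_coord a y := a 0%N + limn (wsum a y).

Lemma wsum_cvg a y T B :
  (forall N, \sum_(0 <= m < N) `|a m| <= T) -> (forall m, `|y m| <= B) ->
  cvgn (wsum a y) /\ `|limn (wsum a y)| <= T * B.
Proof.
move=> hT hB; have B0 : 0 <= B := le_trans (normr_ge0 _) (hB 0%N).
pose g m := if m is 0 then 0 else a m * y m.-1.
have -> : wsum a y = series g.
  apply/funext => -[|N]; first by rewrite /wsum /series /= !big_geq.
  rewrite /wsum /series /= [in RHS]big_ltn // add0r.
  by apply: eq_big_nat => -[].
apply: series_abs_bounded => N.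
apply: le_trans (_ : \sum_(0 <= m < N) `|a m| * B <= _); last first.
  by rewrite -mulr_suml ler_wpM2r.
apply: ler_sum => -[|m] _ /=; first by rewrite normr0 mulr_ge0.
by rewrite normrM ler_wpM2l.
Qed.

Lemma affine_coord_bound a y T B :
  (forall N, \sum_(0 <= m < N) `|a m| <= T) -> (forall m, `|y m| <= B) ->
  `|affine_coord a y| <= T * (1 + B).
Proof.
move=> hT hB; have [_ hlim] := wsum_cvg hT hB.
rewrite mulrDr mulr1; apply: le_trans (ler_normD _ _) _; apply: lerD hlim.
by have := hT 1%N; rewrite big_nat1.
Qed.

Lemma affine_coord_dist a a' y y' T D B e :
  (forall N, \sum_(0 <= m < N) `|a m| <= T) ->
  (forall N, \sum_(0 <= m < N) `|a m - a' m| <= D) ->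
  (forall m, `|y m| <= B) -> (forall m, `|y m - y' m| <= e) ->
  `|affine_coord a y - affine_coord a' y'| <= D * (1 + B) + (T + D) * e.
Proof.
move=> hT hD hB he.
have hT' N : \sum_(0 <= m < N) `|a' m| <= T + D.
  apply: le_trans (lerD (hT N) (hD N)); rewrite -big_split /=.
  apply: ler_sum => m _.
  by rewrite -{1}[a' m](subKr (a m)) ler_normB.
have hB' m : `|y' m| <= B + e.
  by rewrite -{1}[y' m](subKr (y m)) (le_trans (ler_normB _ _)) ?lerD.
have [cvg_ay _] := wsum_cvg hT hB.
have [cvg_ay' _] := wsum_cvg hT' hB'.
have [cvg_da hda] := wsum_cvg hD hB.
have [cvg_dy hdy] := wsum_cvg hT' he.
have -> : affine_coord a y - affine_coord a' y' = (a 0%N - a' 0%N) +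
    (limn (wsum (fun m => a m - a' m) y) + limn (wsum a' (fun m => y m - y' m))).
  rewrite /affine_coord -limD // opprD addrACA -limB //; congr (_ + limn _).
  apply/funext => N; rewrite /wsum !fctE -sumrB -big_split /=.
  by apply: eq_bigr => m _; ring.
rewrite mulrDr mulr1 -[leRHS]addrA; apply: le_trans (ler_normD _ _) _; apply: lerD.
  by have := hD 1%N; rewrite big_nat1.
exact: le_trans (ler_normD _ _) (lerD hda hdy).
Qed.

Lemma sum_sq_ge0 a : (0 <= \sum_(k <oo) ((a k) ^+ 2)%:E)%E.
Proof. by apply: nneseries_ge0 => k _ _; rewrite lee_fin sqr_ge0. Qed.

Lemma l2norm_ge0 a : 0 <= l2norm a.
Proof. exact: sqrtr_ge0. Qed.

Lemma in_l2_fin_num a : in_l2 a -> (\sum_(k <oo) ((a k) ^+ 2)%:E)%E \is a fin_num.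
Proof. by move=> h; rewrite ge0_fin_numE // sum_sq_ge0. Qed.

Lemma l2_coord a n : in_l2 a -> `|a n| <= l2norm a.
Proof.
move=> /in_l2_fin_num fin; rewrite -sqrtr_sqr ler_wsqrtr // -lee_fin fineK //.
apply: le_trans (nneseries_lim_ge n.+1 _); last by move=> k _ _; rewrite lee_fin sqr_ge0.
rewrite big_nat_recr //= leeDr //.
by apply: sume_ge0 => k _; rewrite lee_fin sqr_ge0.
Qed.

Lemma sum_sqB_le a b :
  (\sum_(k <oo) ((a k - b k) ^+ 2)%:E <=
    2%:E * \sum_(k <oo) ((a k) ^+ 2)%:E + 2%:E * \sum_(k <oo) ((b k) ^+ 2)%:E)%E.
Proof.
rewrite -!nneseriesZl => [|k _|k _]; try by rewrite lee_fin sqr_ge0.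
rewrite -nneseriesD => [|k _ _|k _ _]; try by rewrite mule_ge0 // lee_fin sqr_ge0.
apply: lee_nneseries => [k _ _|k _]; first by rewrite lee_fin sqr_ge0.
rewrite -!EFinM -EFinD lee_fin.
by have := sqr_ge0 (a k + b k); nra.
Qed.

Lemma in_l2B a b : in_l2 a -> in_l2 b -> in_l2 (fun n => a n - b n).
Proof.
move=> /in_l2_fin_num fa /in_l2_fin_num fb; apply: le_lt_trans (sum_sqB_le a b) _.
by rewrite -(fineK fa) -(fineK fb) -!EFinM -EFinD ltry.
Qed.

Lemma l2normB_le a b : in_l2 a -> in_l2 b ->
  l2norm (fun n => a n - b n) <= 2 * (l2norm a + l2norm b).
Proof.
move=> ha hb; have := sum_sqB_le a b.
rewrite -(fineK (in_l2_fin_num ha)) -(fineK (in_l2_fin_num hb)).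
rewrite -(fineK (in_l2_fin_num (in_l2B ha hb))) -!EFinM -EFinD lee_fin /l2norm.
set z := fine _; set x := fine _; set y := fine _ => hz.
have [x0 y0] : 0 <= x /\ 0 <= y by split; apply/fine_ge0/sum_sq_ge0.
rewrite -(@ger0_norm _ (2 * _)) ?mulr_ge0 ?addr_ge0 ?sqrtr_ge0 //.
rewrite -sqrtr_sqr ler_wsqrtr //.
rewrite exprMn (sqrrD (Num.sqrt x)) !sqr_sqrtr //.
by have := mulr_ge0 (sqrtr_ge0 x) (sqrtr_ge0 y); lra.
Qed.

Lemma sum_coord_le_l2_series (a : nat -> nat -> R) n N :
  (forall m, in_l2 (a m)) -> (\sum_(m <oo) (l2norm (a m))%:E < +oo)%E ->
  \sum_(0 <= m < N) `|a m n| <= fine (\sum_(m <oo) (l2norm (a m))%:E).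
Proof.
move=> l2a fin; apply: le_trans (ler_sum _ (fun m _ => l2_coord n (l2a m))) _.
have fin' : (\sum_(m <oo) (l2norm (a m))%:E)%E \is a fin_num.
  by rewrite ge0_fin_numE // nneseries_ge0 // => m _ _; rewrite lee_fin l2norm_ge0.
rewrite -lee_fin fineK // -sumEFin.
by apply: nneseries_lim_ge => m _ _; rewrite lee_fin l2norm_ge0.
Qed.

Lemma Rd_coord_le d a : Rd d a -> forall n, `|a n| <= \sum_(0 <= k < d) `|a k|.
Proof.
move=> ha n; have [nd|dn] := ltnP n d; last by rewrite ha // normr0 sumr_ge0.
by rewrite big_mkord (bigD1 (Ordinal nd)) //= lerDl sumr_ge0.
Qed.

Lemma l2norm_Rd d a : Rd d a -> l2norm a = Num.sqrt (\sum_(0 <= n < d) a n ^+ 2).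
Proof.
move=> ha; rewrite /l2norm (@nneseries_split _ _ 0 d); last first.
  by move=> k _; rewrite lee_fin sqr_ge0.
rewrite add0n (@eseries0 _ _ d xpredT) => [|k dk _]; last by rewrite ha // expr0n.
by rewrite adde0 sumEFin.
Qed.

Lemma sqrt_dist_le (x y : R) : 0 <= x -> 0 <= y ->
  `|Num.sqrt x - Num.sqrt y| <= Num.sqrt `|x - y|.
Proof.
move=> x0 y0; rewrite -sqrtr_sqr ler_wsqrtr //.
rewrite -[in leRHS](sqr_sqrtr x0) -[in leRHS](sqr_sqrtr y0).
have [s0 t0] := (sqrtr_ge0 x, sqrtr_ge0 y).
move: (Num.sqrt x) (Num.sqrt y) s0 t0 => s t s0 t0.
rewrite -(ger0_norm (sqr_ge0 (s - t))) normrX subr_sqr normrM expr2 ler_wpM2l //.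
by rewrite (le_trans (ler_normB _ _)) // (ger0_norm (addr_ge0 s0 t0)) !ger0_norm.
Qed.

Lemma relu_dist_le (x y : R) : `|Num.max x 0 - Num.max y 0| <= `|x - y|.
Proof.
have := ler_norm (x - y); have := ler_norm (y - x); rewrite distrC => h1 h2.
rewrite ler_norml; case: (lerP 0 x) => x0; case: (lerP 0 y) => y0;
  rewrite ?(max_l x0) ?(max_l y0) ?(max_r (ltW x0)) ?(max_r (ltW y0)).
all: by apply/andP; split; lra.
Qed.

Lemma relu_norm_le (x : R) : `|Num.max x 0| <= `|x|.
Proof. by case: (lerP 0 x) => x0; rewrite ?(max_l x0) ?(max_r (ltW x0)) ?normr0. Qed.

Lemma sum_sq_dist_le a b d A e : (forall n, `|a n| <= A) ->
  (forall n, `|a n - b n| <= e) -> e <= 1 ->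
  `|\sum_(0 <= n < d) a n ^+ 2 - \sum_(0 <= n < d) b n ^+ 2| <= e * (2 * A + 1) *+ d.
Proof.
move=> hA hab e1; rewrite -sumrB; apply: le_trans (ler_norm_sum _ _ _) _.
apply: (@le_trans _ _ (\sum_(0 <= n < d) e * (2 * A + 1))); last first.
  by rewrite sumr_const_nat subn0.
apply: ler_sum => n _.
have A0 : 0 <= A := le_trans (normr_ge0 _) (hA 0%N).
rewrite subr_sqr normrM ler_pM ?normr_ge0 ?hab //.
have -> : a n + b n = 2 * a n - (a n - b n) by ring.
apply: le_trans (ler_normB _ _) _; rewrite normrM ger0_norm // lerD //.
  by rewrite ler_wpM2l.
exact: le_trans (hab n) e1.
Qed.

End RealEstimates.

Section Network.
Variables (R : realType) (d1 d3 I : nat).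
Local Notation U := (paramU R d1 d3 I).
Local Notation param := (nat -> nat -> nat -> R).
Local Notation th u := (proj1_sig u).
Implicit Types (u v : U) (t : param).

Lemma param_vanish u i m n : (I < i)%N -> th u i m n = 0.
Proof. by case: (proj2_sig u) => h _ _ _ _; exact: h. Qed.

Lemma param_Rd u m : Rd d3 (th u I m).
Proof. by case: (proj2_sig u) => _ _ h _ _. Qed.

Lemma param_l2 u i m : (i <= I)%N -> in_l2 (th u i m).
Proof. by case: (proj2_sig u) => _ _ _ h _; exact: h. Qed.

Lemma param_tv_fin u i : (i <= I)%N -> (\sum_(m <oo) (l2norm (th u i m))%:E < +oo)%E.
Proof. by case: (proj2_sig u) => _ _ _ _ h; exact: h. Qed.

Lemma sum_l2norm_ge0 (a : nat -> nat -> R) : (0 <= \sum_(m <oo) (l2norm (a m))%:E)%E.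
Proof. by apply: nneseries_ge0 => m _ _; rewrite lee_fin l2norm_ge0. Qed.

Definition tv u i := fine (\sum_(m <oo) (l2norm (th u i m))%:E).

Lemma sum_coord_le_tv u i n N : \sum_(0 <= m < N) `|th u i m n| <= tv u i.
Proof.
have [iI|Ii] := leqP i I.
  exact: sum_coord_le_l2_series (fun m => param_l2 u m iI) (param_tv_fin u iI).
by rewrite big1 ?fine_ge0 ?sum_l2norm_ge0 // => m _; rewrite param_vanish ?normr0.
Qed.

Lemma distU_ge0 u v : 0 <= distU u v.
Proof. by apply: sumr_ge0 => i _; apply/fine_ge0/sum_l2norm_ge0. Qed.

(* [distU] takes [fine] of each layer's series, so these must first be shown finite. *)
Lemma sum_l2normB_fin u v i : (i <= I)%N ->
  (\sum_(m <oo) (l2norm (fun n => th u i m n - th v i m n))%:E < +oo)%E.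
Proof.
move=> iI; apply: le_lt_trans (_ : _ <= 2%:E * \sum_(m <oo) (l2norm (th u i m))%:E +
                                     2%:E * \sum_(m <oo) (l2norm (th v i m))%:E)%E _.
  rewrite -!nneseriesZl => [|m _|m _]; try by rewrite lee_fin l2norm_ge0.
  rewrite -nneseriesD => [|m _ _|m _ _]; try by rewrite mule_ge0 // lee_fin l2norm_ge0.
  apply: lee_nneseries => [m _ _|m _]; first by rewrite lee_fin l2norm_ge0.
  rewrite -!EFinM -EFinD lee_fin -mulrDr.
  exact: l2normB_le (param_l2 u m iI) (param_l2 v m iI).
have tv_fin_num (w : U) : (\sum_(m <oo) (l2norm (th w i m))%:E)%E \is a fin_num.
  by rewrite ge0_fin_numE ?sum_l2norm_ge0 ?param_tv_fin.
by rewrite -(fineK (tv_fin_num u)) -(fineK (tv_fin_num v)) -!EFinM -EFinD ltry.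
Qed.

Lemma sum_coordB_le_distU u v i n N :
  \sum_(0 <= m < N) `|th u i m n - th v i m n| <= distU u v.
Proof.
have [iI|Ii] := leqP i I; last first.
  by rewrite big1 ?distU_ge0 // => m _; rewrite !param_vanish // subr0 normr0.
have l2B m := in_l2B (param_l2 u m iI) (param_l2 v m iI).
apply: le_trans (sum_coord_le_l2_series n N l2B (sum_l2normB_fin u v iI)) _.
rewrite /distU (bigD1 (Ordinal (iI : (i < I.+1)%N))) //= lerDl.
by apply: sumr_ge0 => j _; apply/fine_ge0/sum_l2norm_ge0.
Qed.

Lemma coordB_le_distU u v i m n : `|th u i m n - th v i m n| <= distU u v.
Proof.
apply: le_trans (sum_coordB_le_distU u v i n m.+1).
by rewrite big_nat_recr //= lerDr sumr_ge0.
Qed.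

Definition coord_bounded (w : param -> nat -> R) u :=
  exists B, forall n, `|w (th u) n| <= B.

Definition ucont_at (w : param -> nat -> R) u := forall eps, 0 < eps ->
  exists2 e, 0 < e & forall v, distU u v < e -> forall n, `|w (th u) n - w (th v) n| <= eps.

Lemma layerE t i y n : layer t i y n = affine_coord (fun m => t i m n) y.
Proof. by []. Qed.

Lemma layer_bounded (w : param -> nat -> R) i u :
  coord_bounded w u -> coord_bounded (fun t => layer t i (w t)) u.
Proof.
move=> [B hB]; exists (tv u i * (1 + B)) => n.
by rewrite layerE; apply: affine_coord_bound hB => N; exact: sum_coord_le_tv.
Qed.

Lemma layer_ucont (w : param -> nat -> R) i u :
  coord_bounded w u -> ucont_at w u -> ucont_at (fun t => layer t i (w t)) u.
Proof.
move=> [B hB] hw eps eps0.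
have B0 : 0 <= B := le_trans (normr_ge0 _) (hB 0%N).
have T0 : 0 <= tv u i := fine_ge0 (sum_l2norm_ge0 _).
pose dw := eps / (2 * (tv u i + 1)).
have dw0 : 0 < dw by rewrite divr_gt0 // mulr_gt0 //; lra.
have [e1 e10 he1] := hw dw dw0.
have eB0 : 0 < eps / (2 * (1 + B)) by rewrite divr_gt0 // mulr_gt0 //; lra.
exists (Num.min e1 (Num.min 1 (eps / (2 * (1 + B))))); first by rewrite !lt_min e10 ltr01.
move=> v; rewrite !lt_min => /andP[/he1 hv /andP[uv1 uvB]] n.
rewrite !layerE; apply: le_trans (affine_coord_dist _ _ hB hv) _.
- by move=> N; exact: sum_coord_le_tv.
- by move=> N; exact: sum_coordB_le_distU.
have D0 := distU_ge0 u v.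
rewrite ltr_pdivlMr in uvB; last by rewrite mulr_gt0 //; lra.
have dwE : (tv u i + 1) * dw = eps / 2 by rewrite /dw; field; lra.
have Ddw : distU u v * dw <= dw by rewrite ler_piMl // ltW.
by clearbody dw; nra.
Qed.

Lemma relu_bounded (w : param -> nat -> R) u :
  coord_bounded w u -> coord_bounded (fun t => relu (w t)) u.
Proof. by move=> [B hB]; exists B => n; apply: le_trans (relu_norm_le _) (hB n). Qed.

Lemma relu_ucont (w : param -> nat -> R) u :
  ucont_at w u -> ucont_at (fun t => relu (w t)) u.
Proof.
move=> hw eps /hw[e e0 he]; exists e => // v /he hv n.
exact: le_trans (relu_dist_le _ _) (hv n).
Qed.

Lemma hidden_bounded_ucont x u k : (exists B, forall n, `|x n| <= B) ->
  coord_bounded (fun t => hidden t k x) u /\ ucont_at (fun t => hidden t k x) u.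
Proof.
move=> x_bounded; elim: k => [|k [hb hc]].
  split; first exact: (@layer_bounded (fun _ => x)).
  apply: (@layer_ucont (fun _ => x)) => // eps eps0.
  by exists 1 => // v _ n; rewrite subrr normr0 ltW.
split; first exact/layer_bounded/relu_bounded.
exact/layer_ucont/relu_ucont/hc/relu_bounded.
Qed.

Lemma net_Rd u x : Rd d3 (net I (th u) x).
Proof.
move=> n d3n; have last_layer_vanish y : layer (th u) I y n = 0.
  rewrite layerE /affine_coord (param_Rd u 0%N d3n) add0r.
  rewrite (_ : wsum _ _ = fun=> 0) ?lim_cst //; apply/funext => N.
  by rewrite /wsum big1 // => m _; rewrite (param_Rd u m d3n) mul0r.
have hidden_layer k t : exists y, hidden t k x = layer t k y by case: k; eexists.
by rewrite /net; have [y ->] := hidden_layer I (th u).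
Qed.

Lemma net_ucont x u : Rd d1 x -> ucont_at (fun t => net I t x) u.
Proof.
move=> /Rd_coord_le x_bounded.
by have [] := hidden_bounded_ucont u I (ex_intro _ _ x_bounded).
Qed.

Lemma ucontB (w w' : param -> nat -> R) u : ucont_at w u -> ucont_at w' u ->
  ucont_at (fun t n => w t n - w' t n) u.
Proof.
move=> hw hw' eps eps0; have eps20 : 0 < eps / 2 by rewrite divr_gt0.
have [e e0 he] := hw _ eps20; have [e' e'0 he'] := hw' _ eps20.
exists (Num.min e e'); first by rewrite lt_min e0 e'0.
move=> v; rewrite lt_min => /andP[/he hv /he' hv'] n.
rewrite (_ : _ - _ = (w (th u) n - w (th v) n) - (w' (th u) n - w' (th v) n)); last by ring.
by rewrite (le_trans (ler_normB _ _)) // (splitr eps) lerD.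
Qed.

Definition cont_at (h : param -> R) u := forall eps, 0 < eps ->
  exists2 e, 0 < e & forall v, distU u v < e -> `|h (th u) - h (th v)| < eps.

Lemma l2norm_cont d (w : param -> nat -> R) u : (forall v, Rd d (w (th v))) ->
  ucont_at w u -> cont_at (fun t => l2norm (w t)) u.
Proof.
move=> wRd hw eps eps0.
pose A := \sum_(0 <= k < d) `|w (th u) k|.
have A0 : 0 <= A by rewrite sumr_ge0.
pose K := (2 * A + 1) *+ d.
have K0 : 0 <= K by rewrite mulrn_wge0 //; lra.
pose dw := Num.min 1 (eps ^+ 2 / (K + 1)).
have dw0 : 0 < dw by rewrite lt_min ltr01 divr_gt0 ?exprn_gt0 //; lra.
have [e e0 he] := hw dw dw0.
exists e => // v /he hv /=; rewrite !(l2norm_Rd (wRd _)).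
apply: le_lt_trans (sqrt_dist_le (sumr_ge0 _ _) (sumr_ge0 _ _)) _;
  try by move=> *; exact: sqr_ge0.
rewrite -[ltRHS](gtr0_norm eps0) -[ltRHS]sqrtr_sqr ltr_sqrt ?exprn_gt0 //.
have dw1 : dw <= 1 by rewrite ge_min lexx.
apply: le_lt_trans (sum_sq_dist_le d (Rd_coord_le (wRd u)) hv dw1) _.
rewrite -mulrnAr -/K.
have : dw <= eps ^+ 2 / (K + 1) by rewrite ge_min lexx orbT.
rewrite ler_pdivlMr; last lra.
by have := mulr_ge0 (ltW dw0) K0; nra.
Qed.

Lemma cont_atMr (h : param -> R) c u : cont_at h u -> cont_at (fun t => h t * c) u.
Proof.
move=> hh eps eps0; have c1 : 0 < `|c| + 1 by rewrite ltr_wpDl.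
have [e e0 he] := hh _ (divr_gt0 eps0 c1).
exists e => // v /he hv; rewrite -mulrBl normrM.
rewrite (le_lt_trans (ler_wpM2r (normr_ge0 c) (ltW hv))) // mulrAC ltr_pdivrMr //.
by rewrite ltr_pM2l // ltrDl.
Qed.

Definition lsc (F : param -> \bar R) :=
  forall a : R, Defs.openU [set u : U | (a%:E < F (th u))%E].

Lemma lsc_ereal_sup (S : param -> set (\bar R)) :
  (forall u z, S (th u) z -> exists h, [/\ cont_at h u, z = (h (th u))%:E &
      forall v, S (th v) (h (th v))%:E]) ->
  lsc (fun t => ereal_sup (S t)).
Proof.
move=> hS a u /ereal_sup_gt[z Sz az]; have [h [ch zE Sh]] := hS u z Sz.
rewrite zE lte_fin -subr_gt0 in az.
have [e e0 he] := ch _ az; exists e => // v /he hv.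
apply: lt_le_trans (ereal_sup_ubound (Sh v)); rewrite lte_fin.
by have := ler_norm (h (th u) - h (th v)); lra.
Qed.

Lemma lsc_coord_neq0 i m n : lsc (fun t => ((t i m n != 0)%:R)%:E).
Proof.
move=> a u /=; case: eqVneq => [_|nz] /=.
  rewrite lte_fin mulr0n => a0; exists 1 => // v _; rewrite lte_fin.
  by case: (_ != _); rewrite ?mulr0n ?mulr1n // (lt_trans a0).
move=> ha; exists `|th u i m n|; first by rewrite normr_gt0.
move=> v hv; suff -> : th v i m n != 0 by [].
apply: contraTneq hv => v0; have := coordB_le_distU u v i m n.
by rewrite v0 subr0 leNgt => /negbTE->.
Qed.

Lemma lsc_growth : lsc (growthN d1 I).
Proof.
apply: lsc_ereal_sup => u _ [x x_Rd <-].
exists (fun t => l2norm (net I t x) / (1 + l2norm x)); split => //.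
- by apply/cont_atMr/l2norm_cont/net_ucont => // v; exact: net_Rd.
- by move=> v; exists x.
Qed.

Lemma lsc_lip : lsc (lipN d1 I).
Proof.
apply: lsc_ereal_sup => u _ [x [y [x_Rd y_Rd xy ->]]].
exists (fun t => l2norm (fun n => net I t x n - net I t y n) / l2norm (fun n => x n - y n)).
split => //; last by move=> v; exists x, y.
apply/cont_atMr/(l2norm_cont (d := d3))/ucontB; try exact: net_ucont.
by move=> v n d3n; rewrite !net_Rd ?subr0.
Qed.

Section Measurability.
Variables (d : measure_display) (Omega : measurableType d) (mu : Omega -> U).
Hypothesis mu_meas : forall B, borelU B -> measurable (mu @^-1` B).

Lemma lsc_measurable F : lsc F -> measurable_fun setT (fun w => F (th (mu w))).
Proof.
move=> F_lsc; apply: (@measurability _ _ _ _ _ _ (@ErealGenOInfty.G R)).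
  exact: ErealGenOInfty.measurableE.
move=> _ [_ [r ->] <-]; rewrite setTI.
rewrite (_ : _ @^-1` _ = mu @^-1` [set u | (r%:E < F (th u))%E]).
  by apply: mu_meas; apply: sub_sigma_algebra; exact: F_lsc.
by apply/seteqP; split => w /=; rewrite in_itv /= andbT.
Qed.

Lemma measurable_sizeN : measurable_fun setT (fun w => sizeN I (th (mu w))).
Proof.
apply: emeasurable_sum => i.
apply: ge0_emeasurable_sum => [m w _ _|m _]; first by apply: nneseries_ge0.
apply: ge0_emeasurable_sum => [n w _ _|n _]; first by [].
exact: lsc_measurable (@lsc_coord_neq0 i m n).
Qed.
End Measurability.
End Network.

Theorem proposition3 (R : realType) (d1 d3 I : nat)
  (d : measure_display) (Omega : measurableType d) (P : probability Omega R)
  (mu : Omega -> paramU R d1 d3 I)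
  (mu_meas : forall B, borelU B -> measurable (mu @^-1` B)) :
  [/\ measurable_fun setT ((fun w => sizeN I (proj1_sig (mu w))) : Omega -> \bar R),
      measurable_fun setT (fun w => growthN d1 I (proj1_sig (mu w))) &
      measurable_fun setT ((fun w => lipN d1 I (proj1_sig (mu w))) : Omega -> \bar R)].
Proof.
split.
- exact: measurable_sizeN.
- exact/lsc_measurable/lsc_growth.
- exact/lsc_measurable/lsc_lip.
Qed.
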